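(* Let $I=((x_1x_2)^{\omega_1},x_2x_3,x_3x_4)\subseteq S=\mathbb{K}[x_1,x_2,x_3,x_4]$ with $\omega_1\ge2$ (the edge ideal of the weighted path $x_1-x_2-x_3-x_4$ with weights $\omega_1,1,1$). Then $\operatorname{depth}(S/I^t)\ge1$ for every $t\ge2$.
   Context: $\mathbb{K}$ is a field; $\operatorname{depth}$ is the depth of a graded $S$-module. *)

From mathcomp Require Import all_boot all_algebra.
From mathcomp Require Import mpoly.
Set Implicit Arguments. Unset Strict Implicit. Unset Printing Implicit Defensive.
Import GRing.Theory.
Local Open Scope ring_scope.

Definition in_ideal (R : comRingType) (s : seq R) (p : R) : Prop :=
  exists cs : seq R, p = \sum_(i < size s) cs`_i * s`_i.

Fixpoint pow_gens (R : comRingType) (s : seq R) (t : nat) : seq R :=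
  match t with
  | 0 => [:: 1]
  | t'.+1 => [seq a * b | a <- s, b <- pow_gens s t']
  end.

Definition max_gens (K : fieldType) (n : nat) : seq {mpoly K[n]} :=
  [seq 'X_i | i <- enum 'I_n].

(* depth (S/J) >= 1, with S = K[x_1..x_n], J generated by gens:
   there is a regular sequence of length 1 on S/J in m, i.e. an f in m
   which is a nonzerodivisor on S/J and with S/J <> f (S/J). *)
Definition depth_quot_ge1 (K : fieldType) (n : nat) (gens : seq {mpoly K[n]})
  : Prop :=
  exists f : {mpoly K[n]},
    [/\ in_ideal (max_gens K n) f,
        (forall g : {mpoly K[n]}, in_ideal gens (f * g) -> in_ideal gens g)
      & ~ in_ideal (f :: gens) 1].

From mathcomp Require Import all_boot all_algebra.
From mathcomp Require Import mpoly.
From mathcomp Require Import zify ring.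
Set Implicit Arguments. Unset Strict Implicit. Unset Printing Implicit Defensive.
Import GRing.Theory.
Local Open Scope ring_scope.

(* The ideal [I^t] is monomial: [x^m] lies in it iff [m] dominates the
   exponent of [(x_1 x_2)^(w i) (x_2 x_3)^j (x_3 x_4)^k] for some
   [i + j + k = t].  This set of exponents is closed under taking the minimum
   in the coordinates of [x_1], [x_4] and the maximum in those of [x_2],
   [x_3]: use [(min i i', t - min i i' - min k k', min k k')], the surplus on
   [x_2] being paid because [w >= 1].
   That closure makes [x_1 + x_4] a nonzerodivisor modulo the ideal: if
   [(x_1 + x_4) h] is in it but no monomial of [h] is, fix the [x_2]- and
   [x_3]-degrees of some monomial of [h] and pick in that fiber monomials
   [m1], [m2] of maximal [x_1]- resp. [x_4]-degree.  The coefficients of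
   [x_1 x^m1] and [x_4 x^m2] in [(x_1 + x_4) h] do not cancel, so both
   monomials lie in the ideal, and their mix divides [x^m1].
   Finally neither [x_1 + x_4] nor [I^t] has a constant term. *)

Section Ideal.
Variables (R : comNzRingType) (s : seq R).

Lemma in_ideal0 : in_ideal s 0.
Proof. by exists [::]; rewrite big1 // => i _; rewrite nth_nil mul0r. Qed.

Lemma in_idealD p q : in_ideal s p -> in_ideal s q -> in_ideal s (p + q).
Proof.
move=> [a ->] [b ->]; exists (mkseq (fun i => a`_i + b`_i) (size s)).
rewrite -big_split /=; apply: eq_bigr => i _.
by rewrite nth_mkseq // mulrDl.
Qed.

Lemma in_idealM c p : in_ideal s p -> in_ideal s (c * p).
Proof.
move=> [a ->]; exists (mkseq (fun i => c * a`_i) (size s)).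
rewrite mulr_sumr; apply: eq_bigr => i _.
by rewrite nth_mkseq // mulrA.
Qed.

Lemma in_idealB p q : in_ideal s p -> in_ideal s q -> in_ideal s (p - q).
Proof. by move=> sp sq; rewrite -(mulN1r q); apply/in_idealD/in_idealM. Qed.

Lemma in_ideal_mem x : x \in s -> in_ideal s x.
Proof.
move=> xs; exists (mkseq (fun i => (i == index x s)%:R) (size s)).
have lt_xs : (index x s < size s)%N by rewrite index_mem.
rewrite (bigD1 (Ordinal lt_xs)) //= nth_mkseq // eqxx mul1r nth_index //.
rewrite big1 ?addr0 // => i neq_i; rewrite nth_mkseq //.
suff /negbTE -> : i != index x s :> nat by rewrite mul0r.
by apply: contra neq_i => /eqP eq_i; apply/eqP/val_inj.
Qed.

Lemma in_ideal_cons x p :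
  in_ideal (x :: s) p -> exists c q, in_ideal s q /\ p = c * x + q.
Proof.
move=> [cs ->]; rewrite big_ord_recl /=.
exists cs`_0, (\sum_(i < size s) cs`_i.+1 * s`_i); split => //.
by exists (behead cs); apply: eq_bigr => i _; rewrite nth_behead.
Qed.

End Ideal.

Lemma seq_argmax (T : eqType) (r : seq T) (P : pred T) (F : T -> nat) :
  has P r ->
  exists2 y, (y \in r) && P y & forall z, z \in r -> P z -> (F z <= F y)%N.
Proof.
move=> hasPr.
suff [y yPr maxE] : exists2 y, (y \in r) && P y & \max_(z <- r | P z) F z = F y.
  by exists y => // z zr Pz; rewrite -maxE leq_bigmax_seq.
elim: r hasPr => //= y r IH; rewrite big_cons.
have [/IH [y' /andP [y'r Py'] ->] _ | hasNr /orP [] // Py] := boolP (has P r).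
  case Py: (P y); last by exists y'; rewrite ?inE ?y'r ?orbT.
  have [le_yy'|lt_y'y] := leqP (F y) (F y').
    by exists y'; rewrite ?inE ?y'r ?orbT //; apply/maxn_idPr.
  by exists y; rewrite ?inE ?eqxx ?Py //; apply/maxn_idPl/ltnW.
by exists y; rewrite ?inE ?eqxx ?Py ?big_hasC ?maxn0.
Qed.

Section MonomialIdeal.
Variables (R : comNzRingType) (n : nat).
Implicit Types (p g h : {mpoly R[n]}) (m : 'X_{1..n}) (s : seq {mpoly R[n]}).

(* For a list [s] of monomials, [mono_in s m] says that ['X_[m]] lies in the
   ideal generated by [s]. *)
Definition mono_in s m : bool := has (fun x => mlead x <= m)%MM s.

Lemma mono_in_le s m m' : mono_in s m -> (m <= m')%MM -> mono_in s m'.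
Proof.
move=> /hasP [x xs le_xm] le_mm'; apply/hasP; exists x => //.
exact: lepm_trans le_mm'.
Qed.

Lemma mcoeffMX_cond p e k :
  (p * 'X_[e])@_k = if (e <= k)%MM then p@_(k - e) else 0.
Proof.
case: ifP => [le_ek|le_ekN]; first by rewrite -{1}(submK le_ek) addmC mcoeffMX.
apply: memN_msupp_eq0; rewrite (perm_mem (msuppMX _ _)).
by apply/mapP => -[m' _ km']; move: le_ekN; rewrite km' lem_addr.
Qed.

Definition mrestr (P : pred 'X_{1..n}) p : {mpoly R[n]} :=
  \sum_(m <- msupp p | P m) p@_m *: 'X_[m].

Lemma mcoeff_mrestr P p k : (mrestr P p)@_k = if P k then p@_k else 0.
Proof.
rewrite raddf_sum /=; under eq_bigr do rewrite mcoeffZ mcoeffX.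
have [kp|kNp] := boolP (k \in msupp p).
  rewrite big_mkcond (bigD1_seq k) ?msupp_uniq //= eqxx mulr1.
  by rewrite big1 ?addr0 // => m /negbTE ->; rewrite mulr0 if_same.
rewrite big1_seq ?(memN_msupp_eq0 kNp) ?if_same // => m /andP [_ mp].
have /negbTE -> : m != k by apply: contraNneq kNp => <-.
by rewrite mulr0.
Qed.

Lemma mrestrE P p : p = mrestr P p + mrestr (predC P) p.
Proof.
apply/mpolyP => k; rewrite mcoeffD !mcoeff_mrestr /=.
by case: (P k); rewrite ?addr0 ?add0r.
Qed.

Definition mnm_mix (a b : 'I_n) m m' : 'X_{1..n} :=
  [multinom if (i == a) || (i == b) then minn (m i) (m' i)
            else maxn (m i) (m' i) | i < n].

Definition mix_closed (M : pred 'X_{1..n}) (a b : 'I_n) :=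
  forall m m', M m -> M m' -> M (mnm_mix a b m m').

Lemma mnm_mix_le (a b : 'I_n) m1 m2 :
  a != b -> (forall i, i != a -> i != b -> m1 i = m2 i) -> (m2 a <= m1 a)%N ->
  (mnm_mix a b (m1 + U_(a)) (m2 + U_(b)) <= m1)%MM.
Proof.
move=> neq_ab eq_off le_a; apply/mnm_lepP => i; rewrite mnmE !mnmDE !mnm1E.
have [-> | neq_ia] := eqVneq i a.
  by rewrite /= eq_sym (negbTE neq_ab) addn0 geq_min le_a orbT.
have [-> | neq_ib] := eqVneq i b.
  by rewrite /= addn0 geq_minl.
by rewrite /= !addn0 eq_off ?maxnn.
Qed.

Section Generators.
Variable s : seq {mpoly R[n]}.
Hypothesis s_monomial : {in s, forall x, x = 'X_[mlead x]}.

Lemma mono_in_msupp p m : in_ideal s p -> m \in msupp p -> mono_in s m.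
Proof.
move=> [cs ->]; apply: contraTT => /hasPn no_div.
rewrite mcoeff_msupp negbK raddf_sum /= big1 // => i _.
have xs := mem_nth 0 (ltn_ord i).
by rewrite (s_monomial xs) mcoeffMX_cond (negbTE (no_div _ xs)).
Qed.

Lemma in_ideal_X m : mono_in s m -> in_ideal s 'X_[m].
Proof.
move=> /hasP [x xs le_xm]; rewrite -(submK le_xm) mpolyXD -(s_monomial xs).
exact/in_idealM/in_ideal_mem.
Qed.

Lemma in_ideal_msupp p : {in msupp p, forall m, mono_in s m} -> in_ideal s p.
Proof.
move=> supp_in; rewrite (mpolyE p) big_seq.
apply: (big_ind (in_ideal s)); [exact: in_ideal0 | exact: in_idealD |].
by move=> m /supp_in /in_ideal_X; rewrite -mul_mpolyC; apply: in_idealM.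
Qed.

Lemma mono_in_corner (c d : 'I_n) h m :
  in_ideal s (('X_c + 'X_d) * h) -> m \in msupp h ->
  (m + U_(c) - U_(d))%MM \notin msupp h -> mono_in s (m + U_(c)).
Proof.
move=> hI mh mNh; apply: (mono_in_msupp hI).
rewrite mcoeff_msupp mulrC mulrDr mcoeffD !mcoeffMX_cond lem_addl addmK.
by case: ifP => _; rewrite ?(memN_msupp_eq0 mNh) addr0 -mcoeff_msupp.
Qed.

Section NonZeroDivisor.
Variables a b : 'I_n.
Hypotheses (neq_ab : a != b) (s_mix : mix_closed (mono_in s) a b).

Lemma mono_in_chain_end h m1 m2 :
  in_ideal s (('X_a + 'X_b) * h) -> m1 \in msupp h -> m2 \in msupp h ->
  (m1 + U_(a) - U_(b))%MM \notin msupp h ->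
  (m2 + U_(b) - U_(a))%MM \notin msupp h ->
  (forall i, i != a -> i != b -> m1 i = m2 i) -> (m2 a <= m1 a)%N ->
  mono_in s m1.
Proof.
move=> hI m1h m2h m1Nh m2Nh eq_off le_a.
have m1a := mono_in_corner hI m1h m1Nh.
rewrite addrC in hI; have m2b := mono_in_corner hI m2h m2Nh.
exact: mono_in_le (s_mix m1a m2b) (mnm_mix_le neq_ab eq_off le_a).
Qed.

Lemma mulXDX_in_ideal_eq0 h :
  in_ideal s (('X_a + 'X_b) * h) -> {in msupp h, forall m, ~~ mono_in s m} ->
  h = 0.
Proof.
move=> hI h_out; apply/eqP; apply: contraT => h_neq0.
pose P m := [forall i, (i != a) && (i != b) ==> (m i == mlead h i)].
have hasPh : has P (msupp h).
  apply/hasP; exists (mlead h); first exact: mlead_supp.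
  by apply/forallP => i; rewrite eqxx implybT.
have [m1 /andP [m1h Pm1] max1] := seq_argmax (fun m => m a) hasPh.
have [m2 /andP [m2h Pm2] max2] := seq_argmax (fun m => m b) hasPh.
have P_shift m (c d : 'I_n) :
    P m -> c \in [:: a; b] -> d \in [:: a; b] -> P (m + U_(c) - U_(d))%MM.
  move=> /forallP Pm cab dab; apply/forallP => i; apply/implyP => iab.
  have ci : c != i by apply: contraTneq cab => ->; rewrite !inE negb_or iab.
  have di : d != i by apply: contraTneq dab => ->; rewrite !inE negb_or iab.
  rewrite mnmBE mnmDE !mnm1E (negbTE ci) (negbTE di) addn0 subn0.
  exact: (implyP (Pm i)).
have neq_ba : b != a by rewrite eq_sym.
have ab_a : a \in [:: a; b] by rewrite inE eqxx.
have ab_b : b \in [:: a; b] by rewrite !inE eqxx orbT.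
have m1Nh : (m1 + U_(a) - U_(b))%MM \notin msupp h.
  apply/negP => /max1 /(_ (P_shift _ _ _ Pm1 ab_a ab_b)).
  by rewrite mnmBE mnmDE !mnm1E eqxx (negbTE neq_ba) addn1 subn0 ltnn.
have m2Nh : (m2 + U_(b) - U_(a))%MM \notin msupp h.
  apply/negP => /max2 /(_ (P_shift _ _ _ Pm2 ab_b ab_a)).
  by rewrite mnmBE mnmDE !mnm1E eqxx (negbTE neq_ab) addn1 subn0 ltnn.
have eq_off i : i != a -> i != b -> m1 i = m2 i.
  move=> ia ib; move/forallP/(_ i): Pm1; move/forallP/(_ i): Pm2.
  by rewrite ia ib => /eqP -> /eqP ->.
have := mono_in_chain_end hI m1h m2h m1Nh m2Nh eq_off (max1 _ m2h Pm2).
by rewrite (negbTE (h_out _ m1h)).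
Qed.

Lemma in_ideal_mulXDX g : in_ideal s (('X_a + 'X_b) * g) -> in_ideal s g.
Proof.
move=> gI; set gin := mrestr (mono_in s) g.
set gout := mrestr (predC (mono_in s)) g.
have gE : g = gin + gout := mrestrE (mono_in s) g.
have ginI : in_ideal s gin.
  apply: in_ideal_msupp => m; rewrite mcoeff_msupp mcoeff_mrestr.
  by case: ifP => // _; rewrite eqxx.
rewrite gE; suff -> : gout = 0 by rewrite addr0.
apply: mulXDX_in_ideal_eq0.
  have -> : ('X_a + 'X_b) * gout = ('X_a + 'X_b) * g - ('X_a + 'X_b) * gin.
    by rewrite gE; ring.
  exact/in_idealB/in_idealM.
move=> m; rewrite mcoeff_msupp mcoeff_mrestr /=.
by case: ifP => // _; rewrite eqxx.
Qed.

End NonZeroDivisor.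

End Generators.
End MonomialIdeal.

Lemma depth_quot_ge1_mix_closed (K : fieldType) n (s : seq {mpoly K[n]})
    (a b : 'I_n) :
  {in s, forall x, x = 'X_[mlead x]} -> a != b -> mix_closed (mono_in s) a b ->
  ~~ mono_in s 0 -> depth_quot_ge1 s.
Proof.
move=> s_monomial neq_ab s_mix s0; exists ('X_a + 'X_b); split.
- by apply: in_idealD; apply: in_ideal_mem; apply: map_f; rewrite mem_enum.
- by move=> g; apply: in_ideal_mulXDX.
move=> /in_ideal_cons [c [q [qI /(congr1 (mcoeff 0))]]].
have q0 : q@_0 = 0.
  by apply/eqP; apply: contraNT s0; rewrite -mcoeff_msupp; apply: mono_in_msupp.
rewrite mcoeff1 eqxx rmorphD rmorphM /= q0 mcoeffD !mcoeffX !mnm1_eq0.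
rewrite !addr0 mulr0.
by move/eqP; rewrite oner_eq0.
Qed.

Lemma eq_inord n i j : (i <= n)%N -> (j <= n)%N ->
  (inord i == inord j :> 'I_n.+1) = (i == j).
Proof. by move=> le_in le_jn; rewrite -val_eqE /= !inordK. Qed.

Lemma ord4_cases (l : 'I_4) :
  [\/ l = inord 0, l = inord 1, l = inord 2 | l = inord 3].
Proof.
case: l => [[|[|[|[|//]]]] lt_l4];
  [constructor 1 | constructor 2 | constructor 3 | constructor 4];
  by apply: val_inj; rewrite /= inordK.
Qed.

Section PathIdeal.
Variables (R : comNzRingType) (w : nat).
Local Notation U i := (U_(inord i : 'I_4))%MM.
Local Notation x i := ('X_(inord i) : {mpoly R[4]}).
Local Notation g0 := ((x 0 * x 1) ^+ w).
Local Notation g1 := (x 1 * x 2).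
Local Notation g2 := (x 2 * x 3).

Definition path_gens : seq {mpoly R[4]} := [:: g0; g1; g2].

Definition path_exp i j k : 'X_{1..4} :=
  ((U 0 + U 1) *+ w *+ i + (U 1 + U 2) *+ j + (U 2 + U 3) *+ k)%MM.

Lemma path_expE i j k :
  [/\ path_exp i j k (inord 0) = (w * i)%N,
      path_exp i j k (inord 1) = (w * i + j)%N,
      path_exp i j k (inord 2) = (j + k)%N
    & path_exp i j k (inord 3) = k].
Proof.
by rewrite /path_exp !mnmDE !mulmnE !mnmDE !mnm1E !eq_inord //=; split; lia.
Qed.

Lemma path_exp_le i j k m : (path_exp i j k <= m)%MM =
  [&& w * i <= m (inord 0), w * i + j <= m (inord 1),
      j + k <= m (inord 2) & k <= m (inord 3)]%N.
Proof.
have [e0 e1 e2 e3] := path_expE i j k.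
apply/mnm_lepP/and4P => [le_em | [le0 le1 le2 le3] l].
  by split; [rewrite -e0 | rewrite -e1 | rewrite -e2 | rewrite -e3]; apply: le_em.
by case: (ord4_cases l) => ->; rewrite ?e0 ?e1 ?e2 ?e3.
Qed.

Lemma mpolyX_path_exp i j k :
  'X_[path_exp i j k] = g0 ^+ i * g1 ^+ j * g2 ^+ k.
Proof. by rewrite /path_exp -!mpolyXD !mpolyXn -!mpolyXD. Qed.

Lemma mem_pow_path_gens t y : y \in pow_gens path_gens t <->
  exists i j k, (i + j + k = t)%N /\ y = 'X_[path_exp i j k].
Proof.
elim: t y => [|t IH] y.
  rewrite mem_seq1; split => [/eqP -> | [i [j [k [sum0 ->]]]]].
    by exists 0%N, 0%N, 0%N; rewrite mpolyX_path_exp !expr0 !mulr1.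
  have [-> -> ->] : [/\ i = 0, j = 0 & k = 0]%N by split; lia.
  by rewrite mpolyX_path_exp !expr0 !mulr1.
split.
  move=> /allpairsP [[z y'] /= [zg /IH [i [j [k [sum ->]]]] ->]].
  move: zg; rewrite !inE => /or3P [] /eqP ->.
  - by exists i.+1, j, k; split; [lia | rewrite !mpolyX_path_exp exprS; ring].
  - by exists i, j.+1, k; split; [lia | rewrite !mpolyX_path_exp exprS; ring].
  - by exists i, j, k.+1; split; [lia | rewrite !mpolyX_path_exp exprS; ring].
move=> [i [j [k [sum ->]]]].
have [z [i' [j' [k' [zg sum' ->]]]]] : exists z i' j' k', [/\ z \in path_gens,
    (i' + j' + k' = t)%N & 'X_[path_exp i j k] = z * 'X_[path_exp i' j' k']].
  case: i sum => [|i] sum; last first.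
    exists g0, i, j, k; rewrite !inE eqxx !mpolyX_path_exp exprS.
    by split; [| lia | ring].
  case: j sum => [|j] sum; last first.
    exists g1, 0%N, j, k; rewrite !inE eqxx orbT !mpolyX_path_exp exprS.
    by split; [| lia | ring].
  case: k sum => [|k] sum //.
  exists g2, 0%N, 0%N, k; rewrite !inE eqxx !orbT !mpolyX_path_exp exprS.
  by split; [| lia | ring].
by apply: allpairs_f => //; apply/IH; exists i', j', k'.
Qed.

Lemma pow_path_gens_monomial t :
  {in pow_gens path_gens t, forall y, y = 'X_[mlead y]}.
Proof. by move=> y /mem_pow_path_gens [i [j [k [_ ->]]]]; rewrite mleadXm. Qed.

Lemma mono_in_pow_path_gens t m : mono_in (pow_gens path_gens t) m <->
  exists i j k, (i + j + k = t)%N /\ (path_exp i j k <= m)%MM.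
Proof.
split => [/hasP [y /mem_pow_path_gens [i [j [k [sum ->]]]]] |].
  by rewrite mleadXm => le; exists i, j, k.
move=> [i [j [k [sum le]]]].
apply/hasP; exists 'X_[path_exp i j k]; last by rewrite mleadXm.
by apply/mem_pow_path_gens; exists i, j, k.
Qed.

Lemma pow_path_gens_mix_closed t : (0 < w)%N ->
  mix_closed (mono_in (pow_gens path_gens t)) (inord 0) (inord 3).
Proof.
move=> w_gt0 m m' /mono_in_pow_path_gens [i [j [k [sum]]]].
rewrite path_exp_le => /and4P [le0 le1 le2 le3].
move=> /mono_in_pow_path_gens [i' [j' [k' [sum']]]].
rewrite path_exp_le => /and4P [le0' le1' le2' le3'].
apply/mono_in_pow_path_gens.
exists (minn i i'), (t - minn i i' - minn k k')%N, (minn k k'); split; first lia.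
rewrite path_exp_le !mnmE !eq_inord //=.
apply/and4P; split; nia.
Qed.

Lemma pow_path_gens_mono_in0 t : (0 < w)%N -> (0 < t)%N ->
  ~~ mono_in (pow_gens path_gens t) 0.
Proof.
move=> w_gt0 t_gt0; apply/negP => /mono_in_pow_path_gens [i [j [k [sum]]]].
rewrite path_exp_le !mnm0E; nia.
Qed.

End PathIdeal.

Theorem proposition4p13 (K : fieldType) (w1 : nat) (t : nat) :
  (2 <= w1)%N -> (2 <= t)%N ->
  depth_quot_ge1
    (pow_gens
       [:: ('X_(inord 0) * 'X_(inord 1)) ^+ w1;
           'X_(inord 1) * 'X_(inord 2);
           'X_(inord 2) * 'X_(inord 3) : {mpoly K[4]}] t).
Proof.
move=> w1_ge2 t_ge2.
apply: (@depth_quot_ge1_mix_closed _ _ _ (inord 0) (inord 3)).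
- exact: pow_path_gens_monomial.
- by rewrite eq_inord.
- by apply: pow_path_gens_mix_closed; lia.
- by apply: pow_path_gens_mono_in0; lia.
Qed.
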